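(* Let $\mathbf{L}=\mathbf{b}+\mathbb{N}(\mathbf{F})\subseteq\mathbb{N}^n$ be a linear set ($\mathbf{F}$ finite) and $\mathbf{X}\subseteq\mathbf{L}$. Then the following are equivalent: (a) for every $\mathbf{x}\in\mathbf{L}$ and every $\mathbf{w}\in\mathbb{N}_{\ge1}(\mathbf{F})$ there is $N\in\mathbb{N}$ with $\mathbf{x}+\mathbb{N}_{\ge N}\mathbf{w}\subseteq\mathbf{X}$; (b) for every $\mathbf{x}\in\mathbf{L}$ and every $\mathbf{w}\in\mathrm{int}(\mathbf{L})-\mathbf{b}=\mathrm{int}(\mathbb{N}(\mathbf{F}))$ there is $N\in\mathbb{N}$ with $\mathbf{x}+\mathbb{N}_{\ge N}\mathbf{w}\subseteq\mathbf{X}$. In particular, whether $\mathbf{X}\trianglelefteq\mathbf{L}$ holds does not depend on the chosen representation of $\mathbf{L}$.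
   Context: $\mathbb{N}_{\ge1}(\mathbf{F})=\{\sum_{\mathbf{f}\in\mathbf{F}}\lambda_{\mathbf{f}}\mathbf{f}\mid\lambda_{\mathbf{f}}\in\mathbb{N},\lambda_{\mathbf{f}}\ge1\}$. For an $\mathbb{N}$-generated set $\mathbf{P}$ (closed under addition, containing $\mathbf{0}$), a vector $\mathbf{v}\in\mathbf{P}$ is interior if for every $\mathbf{x}\in\mathbf{P}$ there is $m\in\mathbb{N}$ with $m\mathbf{v}-\mathbf{x}\in\mathbf{P}$; $\mathrm{int}(\mathbf{P})$ is the set of interior vectors. For a linear set $\mathbf{L}=\mathbf{b}+\mathbb{N}(\mathbf{F})\subseteq\mathbb{N}^n$ ($\mathbf{b}$ is its unique minimal element), $\mathrm{int}(\mathbf{L})=\mathbf{b}+\mathrm{int}(\mathbf{L}-\mathbf{b})$. $\mathbf{X}\trianglelefteq\mathbf{L}$ is defined by condition (a). *)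

From mathcomp Require Import all_boot.
Set Implicit Arguments. Unset Strict Implicit. Unset Printing Implicit Defensive.

Definition vec (n : nat) := {ffun 'I_n -> nat}.

Definition vadd n (u v : vec n) : vec n := [ffun i => u i + v i].
Definition vscal n (k : nat) (v : vec n) : vec n := [ffun i => k * v i].

Definition Nspan n (F : seq (vec n)) (x : vec n) : Prop :=
  exists lam : vec n -> nat,
    forall i, x i = \sum_(f <- undup F) lam f * f i.

Definition Nspan1 n (F : seq (vec n)) (w : vec n) : Prop :=
  exists lam : vec n -> nat,
    (forall f, f \in F -> 1 <= lam f) /\
    forall i, w i = \sum_(f <- undup F) lam f * f i.

Definition linset n (b : vec n) (F : seq (vec n)) (x : vec n) : Prop :=
  exists y, Nspan F y /\ x = vadd b y.

Definition interior n (P : vec n -> Prop) (v : vec n) : Prop :=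
  P v /\ forall x, P x -> exists m y, P y /\ vscal m v = vadd x y.

Definition eventually_in n (X : vec n -> Prop) (x w : vec n) : Prop :=
  exists N, forall k, N <= k -> X (vadd x (vscal k w)).

Definition cond_a n (b : vec n) (F : seq (vec n)) (X : vec n -> Prop) : Prop :=
  forall x w, linset b F x -> Nspan1 F w -> eventually_in X x w.

(* condition (b): directions in int(L) - b = int(N(F)) *)
Definition cond_b n (b : vec n) (F : seq (vec n)) (X : vec n -> Prop) : Prop :=
  forall x w, linset b F x -> interior (Nspan F) w -> eventually_in X x w.

(* An interior direction w of N(F) has a multiple (m+1) w in N_{>=1}(F): absorbing the
   vector s = sum F (all coefficients 1) gives m w = s + y with y in N(F), and then
   (m+1) w = s + (y + w). Condition (a) along the direction (m+1) w, applied to the m+1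
   starting points x + r w (r <= m) and combined with Euclidean division k = q (m+1) + r,
   yields x + N_{>=N} w in X; so (a) implies (b). Conversely every vector of N_{>=1}(F)
   is interior. Since a linear set determines its minimal element b and hence N(F) as
   L - b, condition (b), and so (a), depends only on L. *)
From mathcomp Require Import all_boot.
From mathcomp Require Import zify.

Set Implicit Arguments.
Unset Strict Implicit.
Unset Printing Implicit Defensive.

Lemma Nspan_add n (F : seq (vec n)) u v :
  Nspan F u -> Nspan F v -> Nspan F (vadd u v).
Proof.
move=> [l Hl] [m Hm]; exists (fun f => l f + m f) => i.
by rewrite ffunE Hl Hm -big_split; apply: eq_bigr => f _; rewrite mulnDl.
Qed.

Lemma Nspan_scal n (F : seq (vec n)) k v : Nspan F v -> Nspan F (vscal k v).
Proof.
move=> [l Hl]; exists (fun f => k * l f) => i.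
by rewrite ffunE Hl big_distrr /=; apply: eq_bigr => f _; rewrite mulnA.
Qed.

Lemma Nspan0 n (F : seq (vec n)) : Nspan F [ffun _ => 0].
Proof. by exists (fun _ => 0) => i; rewrite ffunE big1. Qed.

Lemma Nspan1_sum n (F : seq (vec n)) :
  Nspan1 F [ffun i => \sum_(f <- undup F) f i].
Proof.
by exists (fun _ => 1); split=> // i; rewrite ffunE; apply: eq_bigr => f _; rewrite mul1n.
Qed.

Lemma Nspan1_Nspan n (F : seq (vec n)) w : Nspan1 F w -> Nspan F w.
Proof. by move=> [lam [_ Hw]]; exists lam. Qed.

Lemma Nspan1_addr n (F : seq (vec n)) u v :
  Nspan1 F u -> Nspan F v -> Nspan1 F (vadd u v).
Proof.
move=> [l [l_ge1 Hl]] [m Hm]; exists (fun f => l f + m f); split.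
  by move=> f /l_ge1 l_ge; apply: leq_trans l_ge (leq_addr _ _).
by move=> i; rewrite ffunE Hl Hm -big_split; apply: eq_bigr => f _; rewrite mulnDl.
Qed.

Lemma Nspan1_interior n (F : seq (vec n)) w : Nspan1 F w -> interior (Nspan F) w.
Proof.
move=> Fw; split; first exact: Nspan1_Nspan.
have [lam [lam_ge1 Hw]] := Fw.
(* M w - x has the nonnegative coefficients M lam f - mu f, because lam f >= 1. *)
move=> x [mu Hx]; set M := \sum_(f <- undup F) mu f.
exists M, [ffun i => \sum_(f <- undup F) (M * lam f - mu f) * f i]; split.
  by exists (fun f => M * lam f - mu f) => i; rewrite ffunE.
apply/ffunP => i; rewrite !ffunE Hw Hx big_distrr -big_split.
rewrite big_seq [RHS]big_seq; apply: eq_bigr => f Ff /=.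
have mu_le_M : mu f <= M by rewrite /M (bigD1_seq f) ?undup_uniq ?leq_addr.
have mu_le : mu f <= M * lam f.
  by apply: leq_trans mu_le_M _; rewrite leq_pmulr // lam_ge1 // -mem_undup.
by rewrite mulnA -mulnDl subnKC.
Qed.

Lemma interior_scal_Nspan1 n (F : seq (vec n)) w :
  interior (Nspan F) w -> exists m, Nspan1 F (vscal m.+1 w).
Proof.
move=> [Fw w_int]; set s : vec n := [ffun i => \sum_(f <- undup F) f i].
have [m [y [Fy mw_eq]]] := w_int s (Nspan1_Nspan (Nspan1_sum F)).
exists m; have -> : vscal m.+1 w = vadd s (vadd y w).
  by apply/ffunP => i; move/ffunP/(_ i): mw_eq; rewrite !ffunE; lia.
exact: Nspan1_addr (Nspan1_sum F) (Nspan_add Fy Fw).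
Qed.

Lemma linset_add n (b : vec n) F x w :
  linset b F x -> Nspan F w -> linset b F (vadd x w).
Proof.
move=> [y [Fy ->]] Fw; exists (vadd y w); split; first exact: Nspan_add.
by apply/ffunP => i; rewrite !ffunE addnA.
Qed.

Lemma eventually_forall_ltn (P : nat -> nat -> Prop) R :
  (forall r, r < R -> exists N, forall q, N <= q -> P r q) ->
  exists N, forall r, r < R -> forall q, N <= q -> P r q.
Proof.
elim: R => [|R IH] ev_P; first by exists 0.
have [N HN] := IH (fun r lt_rR => ev_P r (ltnW lt_rR)).
have [N' HN'] := ev_P R (ltnSn R).
exists (maxn N N') => r; rewrite ltnS leq_eqVlt => /orP[/eqP -> | lt_rR] q.
  by rewrite geq_max => /andP[_]; apply: HN'.
by rewrite geq_max => /andP[le_Nq _]; apply: HN.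
Qed.

Lemma eventually_in_mulr n (X : vec n -> Prop) x w m :
  (forall r, r <= m -> eventually_in X (vadd x (vscal r w)) (vscal m.+1 w)) ->
  eventually_in X x w.
Proof.
move=> ev_res.
have [N HN] := @eventually_forall_ltn
  (fun r q => X (vadd (vadd x (vscal r w)) (vscal q (vscal m.+1 w)))) m.+1 ev_res.
exists (N * m.+1) => k le_k.
have -> : vadd x (vscal k w)
    = vadd (vadd x (vscal (k %% m.+1) w)) (vscal (k %/ m.+1) (vscal m.+1 w)).
  by apply/ffunP => i; rewrite !ffunE {1}(divn_eq k m.+1); lia.
by apply: HN; rewrite ?ltn_mod ?leq_divRL.
Qed.

Lemma cond_a_iff_cond_b n (b : vec n) F (X : vec n -> Prop) :
  cond_a b F X <-> cond_b b F X.
Proof.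
split=> ev x w Lx; last by move/Nspan1_interior; apply: ev.
move=> w_int; have [m Fmw] := interior_scal_Nspan1 w_int.
apply: (@eventually_in_mulr _ _ _ _ m) => r _; apply: ev Fmw.
exact/linset_add/Nspan_scal/(proj1 w_int).
Qed.

Lemma linset_le_base n (b : vec n) F x i : linset b F x -> b i <= x i.
Proof. by move=> [y [_ ->]]; rewrite ffunE leq_addr. Qed.

Lemma linset_base n (b : vec n) F : linset b F b.
Proof.
exists [ffun _ => 0]; split; first exact: Nspan0.
by apply/ffunP => i; rewrite !ffunE addn0.
Qed.

Lemma linset_addK n (b : vec n) F y : linset b F (vadd b y) <-> Nspan F y.
Proof.
split=> [[z [Fz /ffunP bz_eq]] | Fy]; last by exists y.
have -> : y = z by apply/ffunP => i; move: (bz_eq i); rewrite !ffunE => /addnI.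
exact: Fz.
Qed.

Lemma linset_eq_base n (b b' : vec n) F F' :
  (forall x, linset b F x <-> linset b' F' x) -> b = b'.
Proof.
move=> eqL; apply/ffunP => i; apply/eqP; rewrite eqn_leq.
by rewrite (linset_le_base _ (proj2 (eqL b') (linset_base _ _)))
           (linset_le_base _ (proj1 (eqL b) (linset_base _ _))).
Qed.

Lemma interior_ext n (P Q : vec n -> Prop) v :
  (forall x, P x <-> Q x) -> interior P v -> interior Q v.
Proof.
move=> eqPQ [Pv v_int]; split; first exact/eqPQ.
move=> x /eqPQ /v_int [m [y [Py mv_eq]]]; exists m, y; split=> //; exact/eqPQ.
Qed.

Lemma cond_b_ext n (b b' : vec n) F F' (X : vec n -> Prop) :
  (forall x, linset b F x <-> linset b' F' x) -> cond_b b F X -> cond_b b' F' X.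
Proof.
move=> eqL; have eq_b := linset_eq_base eqL; subst b'.
have eqN z : Nspan F' z <-> Nspan F z.
  by rewrite -(linset_addK b F') -(linset_addK b F); split=> /eqL.
by move=> ev x w /eqL Lx /(interior_ext eqN); apply: ev.
Qed.

Theorem mainTheorem11 :
  (forall (n : nat) (b : vec n) (F : seq (vec n)) (X : vec n -> Prop),
     (forall x, X x -> linset b F x) ->
     (cond_a b F X <-> cond_b b F X)) /\
  (forall (n : nat) (b b' : vec n) (F F' : seq (vec n)) (X : vec n -> Prop),
     (forall x, linset b F x <-> linset b' F' x) ->
     (forall x, X x -> linset b F x) ->
     (cond_a b F X <-> cond_a b' F' X)).
Proof.
split=> [n b F X _ | n b b' F F' X eqL _]; first exact: cond_a_iff_cond_b.
rewrite !cond_a_iff_cond_b; split; first exact: cond_b_ext.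
by apply: cond_b_ext => x; rewrite eqL.
Qed.
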